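(* Let $P=(X,\leq)$ be a $(3+1)$-free partially ordered set with no infinite antichains. Then there exist a partition of $X$ into antichains and a chain $C\subseteq X$ of $P$ such that $C$ intersects every member of the partition.
   Context: A poset is $(3+1)$-free if it contains no induced subposet isomorphic to the disjoint union of a $3$-element chain and a $1$-element chain (i.e., there are no elements $a<b<c$ and $d$ with $d$ incomparable to each of $a,b,c$). An antichain is a set of pairwise incomparable elements; a chain is a set of pairwise comparable elements. *)

From mathcomp Require Import all_boot all_order.
Set Implicit Arguments. Unset Strict Implicit. Unset Printing Implicit Defensive.
Import Order.Theory.
Local Open Scope order_scope.

Definition antichain {d} {T : porderType d} (A : T -> Prop) : Prop :=
  forall x y : T, A x -> A y -> x <> y -> x >< y.

Definition chain {d} {T : porderType d} (C : T -> Prop) : Prop :=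
  forall x y : T, C x -> C y -> x >=< y.

Definition three_plus_one_free d (T : porderType d) : Prop :=
  ~ exists a b c e : T, [/\ a < b, b < c, e >< a, e >< b & e >< c].

Definition finite_set {T : eqType} (A : T -> Prop) : Prop :=
  exists s : seq T, forall x, A x -> x \in s.

Definition no_infinite_antichain d (T : porderType d) : Prop :=
  forall A : T -> Prop, antichain A -> finite_set A.

Definition is_partition {T : Type} (Pt : (T -> Prop) -> Prop) : Prop :=
  [/\ forall B, Pt B -> exists x, B x,
      forall x, exists B, Pt B /\ B x
    & forall B B', Pt B -> Pt B' -> (exists x, B x /\ B' x) -> B = B'].

From mathcomp Require Import all_boot all_order.
Import Order.Theory.
Local Open Scope order_scope.
From mathcomp Require Import boolp classical_sets.
Set Implicit Arguments. Unset Strict Implicit. Unset Printing Implicit Defensive.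

(* Every finite poset has such a partition: peel off minimal elements level by
   level and let a chain pick one element of each level.  Record this as a
   retraction p onto a chain whose fibres are antichains.  Such a p is
   determined by binary constraints on the pairs (x, p x) and (y, p y), and by
   (3+1)-freeness together with the absence of infinite antichains each x has
   only finitely many candidates for p x (itself or an element incomparable to
   it).  Rado's selection principle then glues the finite retractions into one
   on the whole poset. *)

Section RadoSelection.
Local Open Scope classical_set_scope.
Variables (T : eqType) (D : T -> T -> Prop) (R : T -> T -> T -> T -> Prop).

Hypothesis D_finite : forall x, exists s : seq T, forall v, D x v -> v \in s.
Hypothesis finite_solutions : forall s : seq T, exists f : T -> T,
  {in s, forall x, D x (f x)} /\ {in s &, forall x y, R x (f x) y (f y)}.

Definition solution_avoiding (A : set (T * T)) (s : seq T) (f : T -> T) :=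
  {in s, forall x, D x (f x) /\ ~ A (x, f x)} /\
  {in s &, forall x y, R x (f x) y (f y)}.

Definition extendable (A : set (T * T)) :=
  forall s, exists f, solution_avoiding A s f.

Lemma solution_avoiding_sub A s1 s2 f :
  {subset s1 <= s2} -> solution_avoiding A s2 f -> solution_avoiding A s1 f.
Proof.
move=> s12 [fD fR]; split=> [x xs | x y xs ys]; first exact/fD/s12.
by apply: fR; apply: s12.
Qed.

Lemma extendable0 : extendable set0.
Proof.
move=> s; have [f [fD fR]] := finite_solutions s.
by exists f; split=> // x xs; split=> //; exact: fD.
Qed.

Lemma total_bigcup_seq (U : eqType) (F : set (set U)) (L : seq U) :
  total_on F subset ->
  exists B, (B = set0 \/ F B) /\ {in L, forall q, (\bigcup_(X in F) X) q -> B q}.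
Proof.
move=> Ftot; elim: L => [|q L [B [FB LB]]]; first by exists set0; split; [left|].
have [[X FX Xq]|nq] := pselect ((\bigcup_(X in F) X) q); last first.
  by exists B; split => // q'; rewrite inE => /orP[/eqP-> /nq|/LB].
have [Y [FY BY XY]] : exists Y, [/\ F Y, B `<=` Y & X `<=` Y].
  case: FB => [->|FB]; first by exists X; split.
  by case: (Ftot _ _ FB FX) => [BX|XB]; [exists X | exists B]; split.
exists Y; split; first by right.
by move=> q'; rewrite inE => /orP[/eqP-> _|/LB q'B /q'B /BY //]; apply: XY.
Qed.

Lemma extendable_bigcup (F : set (set (T * T))) :
  F `<=` extendable -> total_on F subset -> extendable (\bigcup_(X in F) X).
Proof.
move=> Fext Ftot s; have [ds ds_spec] := choice D_finite.
have [B [FB LB]] := total_bigcup_seq [seq (x, v) | x <- s, v <- ds x] Ftot.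
have Bext : extendable B by case: FB => [->|/Fext//]; apply: extendable0.
have [f [fD fR]] := Bext s.
exists f; split => // x xs; have [Dx nBx] := fD x xs; split => // Fx.
by apply/nBx/LB => //; apply/allpairsPdep; exists x, (f x); split => //; apply: ds_spec.
Qed.

Lemma maximal_extendable :
  exists A, extendable A /\ forall B, A `<` B -> ~ extendable B.
Proof. exact/Zorn_bigcup/extendable_bigcup. Qed.

(* Forbidding [(x, v)] on top of a maximal [A] destroys extendability, so
   some finite [s] pins [f x] down to [v]; thus at most one value stays
   allowed at each [x]. *)
Lemma forced_value A x v :
  (forall B, A `<` B -> ~ extendable B) -> ~ A (x, v) ->
  exists s, forall f, solution_avoiding A (x :: s) f -> f x = v.
Proof.
move=> Amax nAxv.
have /existsNP[s /forallNP nsol] : ~ extendable (A `|` [set (x, v)]).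
  apply: Amax; split => [q Aq|/(_ (x, v)) AUA]; first by left.
  by apply/nAxv/AUA; right.
exists s => f /(solution_avoiding_sub (mem_subseq (subseq_cons s x)))[fD fR].
apply: contrapT => fxv.
apply: (nsol f); split => // y /fD[Dy nAy]; split => // -[//|[yx]].
by rewrite yx.
Qed.

Theorem rado_selection : exists f : T -> T, forall x y, R x (f x) y (f y).
Proof.
have [A [Aext Amax]] := maximal_extendable.
have allowed_uniq x v w : ~ A (x, v) -> ~ A (x, w) -> v = w.
  move=> /(forced_value Amax)[s1 s1v] /(forced_value Amax)[s2 s2w].
  have [f fsol] := Aext (x :: s1 ++ s2).
  have sub1 : subseq (x :: s1) (x :: s1 ++ s2) by exact: prefix_subseq.
  have sub2 : subseq (x :: s2) (x :: s1 ++ s2) by rewrite /= eqxx suffix_subseq.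
  rewrite -(s1v f (solution_avoiding_sub (mem_subseq sub1) fsol)).
  exact: s2w (solution_avoiding_sub (mem_subseq sub2) fsol).
have allowed x : exists v, D x v /\ ~ A (x, v).
  by have [f [fD _]] := Aext [:: x]; exists (f x); apply/fD/mem_head.
have [g gP] := choice allowed; exists g => x y.
have [f [fD fR]] := Aext [:: x; y].
have xs : x \in [:: x; y] by exact: mem_head.
have ys : y \in [:: x; y] by rewrite !inE eqxx orbT.
have gf z : z \in [:: x; y] -> g z = f z.
  by move=> zs; apply: allowed_uniq (gP z).2 (fD z zs).2.
by rewrite (gf x xs) (gf y ys); apply: fR.
Qed.

End RadoSelection.

Section Levelling.
Variables (d : Order.disp_t) (T : porderType d).

Lemma no_lt_antichain (A : T -> Prop) :
  (forall x y, A x -> A y -> ~ x < y) -> antichain A.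
Proof.
move=> noLt x y Ax Ay xy; apply/negP => /comparable_ltgtP[xy'|yx|//].
  exact: noLt xy'.
exact: noLt yx.
Qed.

Lemma antichain_minimal (A : T -> Prop) :
  antichain (fun v => A v /\ forall w, A w -> ~ w < v).
Proof. by apply: no_lt_antichain => v w [Av _] [_ wmin] /wmin; apply. Qed.

Lemma antichain_nonminimal_incomparable (x : T) : three_plus_one_free T ->
  antichain (fun v => x >< v /\ exists w, x >< w /\ w < v).
Proof.
move=> free31; apply: no_lt_antichain => v w [xv [u [xu uv]]] [xw _] vw.
by apply: free31; exists u, v, w, x.
Qed.

Lemma finite_incomparable (x : T) :
  three_plus_one_free T -> no_infinite_antichain T -> finite_set (fun v => x >< v).
Proof.
move=> free31 noinf.
have [s1 s1P] := noinf _ (antichain_minimal (A := fun v => x >< v)).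
have [s2 s2P] := noinf _ (antichain_nonminimal_incomparable (x := x) free31).
exists (s1 ++ s2) => v xv; rewrite mem_cat.
have [[w [xw wv]]|nw] := pselect (exists w, x >< w /\ w < v).
  by rewrite s2P ?orbT //; split => //; exists w.
by rewrite s1P //; split => // w xw wv; apply: nw; exists w.
Qed.

Lemma count_lt_lt (s : seq T) (y z : T) :
  z \in s -> z < y -> (count (< z) s < count (< y) s)%N.
Proof.
move=> zs zy; rewrite -count_lt_le_mem in zs; apply: leq_trans zs _.
by apply: sub_count => w /= wz; apply: le_lt_trans wz zy.
Qed.

Lemma minimal_below (s : seq T) (y : T) :
  y \in s -> exists2 m, m \in s & m <= y /\ ~~ has (< m) s.
Proof.
have [n] := ubnP (count (< y) s); elim: n y => [|n IH] y //; rewrite ltnS => cy ys.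
have [/hasP[z zs zy]|ymin] := boolP (has (< y) s); last by exists y.
have [m ms [mz mmin]] := IH z (leq_trans (count_lt_lt zs zy) cy) zs.
by exists m => //; split => //; apply: le_trans mz (ltW zy).
Qed.

Definition levelling (s : seq T) (p : T -> T) :=
  [/\ {in s, forall x, p x \in s /\ p (p x) = p x},
      {in s &, forall x y, p x >=< p y}
    & {in s &, forall x y, x < y -> p x <> p y}].

(* The last clause is the idempotence of [p], read at [y = p x]. *)
Definition level_compatible (x a y b : T) :=
  [/\ a >=< b, x < y -> a <> b & a = y -> b = y].

Lemma levelling_incomparable s p x :
  levelling s p -> x \in s -> p x = x \/ x >< p x.
Proof.
move=> [pcl _ plt] xs; have [pxs pidem] := pcl x xs.
have [cmp|] := boolP (x >=< p x); last by right.
left; case: (comparable_ltgtP cmp) => [xpx|pxx|/esym//].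
  by case: (plt x (p x) xs pxs xpx); rewrite pidem.
by case: (plt (p x) x pxs xs pxx).
Qed.

Lemma levelling_compatible s p :
  levelling s p -> {in s &, forall x y, level_compatible x (p x) y (p y)}.
Proof.
move=> [pcl pcmp plt] x y xs ys; split; [exact: pcmp | exact: plt |].
by move=> <-; have [_ ->] := pcl x xs.
Qed.

Lemma levelling_extend (s : seq T) p' m :
  levelling [seq x <- s | has (< x) s] p' -> m \in s -> ~~ has (< m) s ->
  {in [seq x <- s | has (< x) s], forall x, m < p' x} ->
  levelling s (fun x => if has (< x) s then p' x else m).
Proof.
move=> [p'cl p'cmp p'lt] ms mmin mlow.
have in_s' x : x \in s -> has (< x) s -> x \in [seq x <- s | has (< x) s].
  by rewrite mem_filter => -> ->.
split.
- move=> x xs; case: ifP => ax; last by rewrite (negbTE mmin).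
  have [p'x_s' p'idem] := p'cl x (in_s' x xs ax).
  by move: (p'x_s'); rewrite mem_filter => /andP[-> ?].
- move=> x y xs ys; case: ifP => ax; case: ifP => ay.
  + by apply: p'cmp; apply: in_s'.
  + by rewrite comparable_sym; apply/lt_comparable/mlow/in_s'.
  + by apply/lt_comparable/mlow/in_s'.
  + exact: comparablexx.
- move=> x y xs ys xy; have ay : has (< y) s by apply/hasP; exists x.
  rewrite ay; case: ifP => ax; first by apply: p'lt => //; apply: in_s'.
  by apply/eqP; rewrite lt_eqF //; apply/mlow/in_s'.
Qed.

Lemma levelling_exists_least (s : seq T) : exists p, levelling s p /\
  (s != [::] -> exists2 c, c \in s & {in s, forall x, c <= p x}).
Proof.
have [n] := ubnP (size s); elim: n s => [|n IH] s //; rewrite ltnS => size_s.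
have [->|s_nil] := eqVneq s [::].
  by exists id; split => //; split => x; rewrite in_nil.
have [x0 x0s] : exists x0, x0 \in s.
  by case: s s_nil {size_s} => // x0 s0 _; exists x0; apply: mem_head.
have [m0 m0s [_ m0min]] := minimal_below x0s.
pose s' := [seq x <- s | has (< x) s].
have size_s' : (size s' < n)%N.
  rewrite size_filter (leq_trans _ size_s) // ltn_neqAle count_size andbT.
  by rewrite -all_count; apply/allPn; exists m0.
have [p' [p'lev p'least]] := IH s' size_s'.
have [m [ms mmin mlow]] :
    exists m, [/\ m \in s, ~~ has (< m) s & {in s', forall x, m < p' x}].
  have [->|/p'least[c]] := eqVneq s' [::]; first by exists m0.
  rewrite mem_filter => /andP[/hasP[y ys yc] _] clow.
  have [m ms [my mmin]] := minimal_below ys.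
  by exists m; split => // x /clow; apply: lt_le_trans (le_lt_trans my yc).
exists (fun x => if has (< x) s then p' x else m).
split; first exact: levelling_extend.
move=> _; exists m => // x xs; case: ifP => // ax.
by apply/ltW/mlow; rewrite mem_filter ax.
Qed.

Lemma compatible_partition (f : T -> T) :
  (forall x y, level_compatible x (f x) y (f y)) ->
  exists (Pt : (T -> Prop) -> Prop) (C : T -> Prop),
    [/\ is_partition Pt, (forall B, Pt B -> antichain B), chain C
      & forall B, Pt B -> exists x, B x /\ C x].
Proof.
move=> fcomp; have fidem x : f (f x) = f x by have [_ _ ->] := fcomp x (f x).
exists (fun B => exists c, f c = c /\ B = (fun x => f x = c)), (fun c => f c = c).
split.
- split.
  + by move=> B [c [fc ->]]; exists c.
  + by move=> x; exists (fun y => f y = f x); split => //; exists (f x).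
  + by move=> B B' [c [fc ->]] [c' [fc' ->]] [x [<- <-]].
- move=> B [c [fc ->]]; apply: no_lt_antichain => x y fx fy.
  by have [_ fxy _] := fcomp x y; move/fxy; rewrite fx fy.
- by move=> x y fx fy; have [] := fcomp x y; rewrite fx fy.
- by move=> B [c [fc ->]]; exists c.
Qed.

End Levelling.

Theorem mainTheorem2 (d : Order.disp_t) (T : porderType d) :
  three_plus_one_free T -> no_infinite_antichain T ->
  exists (Pt : (T -> Prop) -> Prop) (C : T -> Prop),
    [/\ is_partition Pt,
        (forall B, Pt B -> antichain B),
        chain C
      & forall B, Pt B -> exists x, B x /\ C x].
Proof.
move=> free31 noinf.
have [f fcomp] : exists f : T -> T, forall x y, level_compatible x (f x) y (f y).
  apply: (@rado_selection T (fun x v => v = x \/ x >< v)).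
  - move=> x; have [s sP] := finite_incomparable x free31 noinf.
    by exists (x :: s) => v [->|/sP vs]; rewrite inE ?eqxx ?vs ?orbT.
  - move=> s; have [p [plev _]] := levelling_exists_least s.
    by exists p; split=> [x|]; [apply: levelling_incomparable | apply: levelling_compatible].
exact: compatible_partition fcomp.
Qed.
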